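(* Let $G$ be a finite group. (a) Every element of $G$ of prime order is an isolated vertex of the undeleted difference graph of $G$. (b) If every non-identity element of $G$ has prime order, then $\mathcal{D}(G)$ is null (has no edges).
   Context: For a finite group $G$ with identity $e$: the intersection power graph $\mathcal{G}_I(G)$ has vertex set $G$, two distinct non-identity vertices $x,y$ being adjacent iff $\langle x\rangle\cap\langle y\rangle\neq\{e\}$, and $e$ being adjacent to every other vertex. The power graph $\mathcal{P}(G)$ has vertex set $G$, two distinct vertices being adjacent iff one is a power of the other. The undeleted difference graph of $G$ has vertex set $G$ and edge set $E(\mathcal{G}_I(G))\setminus E(\mathcal{P}(G))$; the difference graph $\mathcal{D}(G)$ is obtained from it by deleting all isolated vertices. *)

From mathcomp Require Import all_boot all_fingroup.
Set Implicit Arguments. Unset Strict Implicit. Unset Printing Implicit Defensive.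
Local Open Scope group_scope.

(* The finite group G is the whole finGroupType gT; vertices are elements of gT. *)
Section Graphs.
Variable gT : finGroupType.

Definition ipg_adj (x y : gT) : bool :=
  (x != y) &&
  [|| x == 1, y == 1 | <[x]> :&: <[y]> != 1].

Definition pg_adj (x y : gT) : bool :=
  (x != y) && ((x \in <[y]>) || (y \in <[x]>)).

Definition udiff_adj (x y : gT) : bool := ipg_adj x y && ~~ pg_adj x y.

Definition udiff_isolated (x : gT) : bool := [forall y, ~~ udiff_adj x y].

Definition diff_vertices : {set gT} := [set x | ~~ udiff_isolated x].
Definition diff_adj (x y : gT) : bool :=
  [&& x \in diff_vertices, y \in diff_vertices & udiff_adj x y].

Definition diff_null : bool := [forall x, forall y, ~~ diff_adj x y].
End Graphs.

From mathcomp Require Import all_boot all_fingroup.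
Local Open Scope group_scope.

(* If x has prime order, <[x]> has no proper nontrivial subgroup, so <[x]>
   meeting <[y]> nontrivially forces x \in <[y]>: every edge of the
   intersection power graph at x is already an edge of the power graph.  The
   identity is a power of every element, so it is isolated as well; hence when
   all non-identity elements have prime order no vertex survives in D(G). *)

Section DifferenceGraph.
Variable gT : finGroupType.
Implicit Types x y : gT.

Lemma pg_adj_prime_order x y : prime #[x] -> ipg_adj x y -> pg_adj x y.
Proof.
move=> px /andP[neq_xy adj]; rewrite /pg_adj neq_xy /=.
have x_neq1 : x != 1 by apply: contraTneq px => ->; rewrite order1.
case/or3P: adj => [/eqP x1 | /eqP -> | meet_xy].
- by rewrite x1 eqxx in x_neq1.
- by rewrite group1 orbT.
- by rewrite -cycle_subG (prime_meetG px meet_xy).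
Qed.

Lemma udiff_isolated_prime_order x : prime #[x] -> udiff_isolated x.
Proof.
move=> px; apply/forallP => y; rewrite /udiff_adj negb_and negbK -implybE.
exact/implyP/pg_adj_prime_order.
Qed.

Lemma udiff_isolated1 : udiff_isolated (1 : gT).
Proof.
apply/forallP => y; rewrite /udiff_adj /pg_adj /ipg_adj group1 /=.
by rewrite andbT andbAC andbN.
Qed.

Lemma diff_null_all_isolated :
  (forall x : gT, udiff_isolated x) -> diff_null gT.
Proof.
move=> iso; apply/forallP => x; apply/forallP => y.
by rewrite /diff_adj inE iso.
Qed.

End DifferenceGraph.

Theorem proposition2p3 (gT : finGroupType) :
  (forall x : gT, prime #[x] -> udiff_isolated x) /\
  ((forall x : gT, x != 1 -> prime #[x]) -> diff_null gT).
Proof.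
split; first exact: udiff_isolated_prime_order.
move=> prime_order; apply: diff_null_all_isolated => x.
have [-> | x_neq1] := eqVneq x 1; first exact: udiff_isolated1.
exact/udiff_isolated_prime_order/prime_order.
Qed.
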